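(* If $\beta=\alpha$, then for $k,\ell\ge 1$: \begin{eqnarray*} |u(3k-1)-u(3k-2)| & = & |u(3k-2)-u(3k-3)|,\\ |v(3k)-v(3k-1)| & = & |v(3k-1)-v(3k-2)|,\\ |w(3k+1)-w(3k)| & = & |w(3k)-w(3k-1)|,\\ |u((3\ell-1)\omega)-u((3\ell-2)\omega)| & = & |u((3\ell-2)\omega)-u((3\ell-3)\omega)|,\\ |v(3\ell\omega)-v((3\ell-1)\omega)| & = & |v((3\ell-1)\omega)-v((3\ell-2)\omega)|,\\ |w((3\ell+1)\omega)-w(3\ell\omega)| & = & |w(3\ell\omega)-w((3\ell-1)\omega)|. \end{eqnarray*}
   Context: Here $\omega=e^{2\pi i/3}$, and $u,v,w$ are the fields on the sector $\{k+\ell\omega: k,\ell\ge0\}$ of the regular triangular lattice obtained from the $fgh$--system with the constraints \[ \alpha u=k\frac{f_0g_0f_3}{f_0g_0+g_0f_3+f_3g_3}+\ell\frac{f_2g_2f_5}{f_2g_2+g_2f_5+f_5g_5}+m\frac{f_4g_4f_1}{f_4g_4+g_4f_1+f_1g_1},\quad \beta v=k\frac{g_0f_3g_3}{f_0g_0+g_0f_3+f_3g_3}+\ell\frac{g_2f_5g_5}{f_2g_2+g_2f_5+f_5g_5}+m\frac{g_4f_1g_1}{f_4g_4+g_4f_1+f_1g_1} \] at every vertex $\mathfrak{z}=k+\ell\omega+m\omega^2$ (with $f_j,g_j$ the increments of $u,v$ along $(\mathfrak{z},\mathfrak{z}+1)$, $(\mathfrak{z}-\omega^2,\mathfrak{z})$,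 $(\mathfrak{z},\mathfrak{z}+\omega)$, $(\mathfrak{z}-1,\mathfrak{z})$, $(\mathfrak{z},\mathfrak{z}+\omega^2)$, $(\mathfrak{z}-\omega,\mathfrak{z})$ for $j=0,\dots,5$), $u(0)=v(0)=w(0)=0$, and initial conditions $u(1)=v(1)=1$, $u(\omega)=v(\omega)=e^{i\theta}$, $0<\theta<\pi$; $w$ is defined by $w(\mathfrak{z}_2)-w(\mathfrak{z}_1)=1/((u(\mathfrak{z}_2)-u(\mathfrak{z}_1))(v(\mathfrak{z}_2)-v(\mathfrak{z}_1)))$ on positively oriented edges ($\mathfrak{z}_2-\mathfrak{z}_1\in\{1,\omega,\omega^2\}$). On the positive $k$-axis the constraint reduces to $\alpha u(k)=k\frac{f(k)g(k)f(k-1)}{f(k)g(k)+g(k)f(k-1)+f(k-1)g(k-1)}$, $\beta v(k)=k\frac{g(k)f(k-1)g(k-1)}{f(k)g(k)+g(k)f(k-1)+f(k-1)g(k-1)}$ with $f(k)=u(k+1)-u(k)$, $g(k)=v(k+1)-v(k)$, and analogously on the $\ell$-axis. *)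

From mathcomp Require Import all_boot all_algebra.
From mathcomp Require Export complex.
From mathcomp Require Export reals trigo.
Import GRing.Theory Num.Theory.
Set Implicit Arguments. Unset Strict Implicit. Unset Printing Implicit Defensive.
Local Open Scope ring_scope.
Local Open Scope complex_scope.

(* A field on the sector {k + l*omega : k, l >= 0} of the triangular lattice is
   a function F : nat -> nat -> R[i], with F k l standing for F(k + l*omega). *)

Definition incK (R : realType) (F : nat -> nat -> R[i]) (k : nat) : R[i] :=
  F k.+1 0%N - F k 0%N.
Definition incL (R : realType) (F : nat -> nat -> R[i]) (l : nat) : R[i] :=
  F 0%N l.+1 - F 0%N l.

(* the denominator f(k)g(k) + g(k)f(k-1) + f(k-1)g(k-1) of the reduced constraint,
   written at index n = k-1, i.e. for the vertex k = n+1 *)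
Definition denom (R : realType) (f g : nat -> R[i]) (n : nat) : R[i] :=
  f n.+1 * g n.+1 + g n.+1 * f n + f n * g n.

(* The fgh-system constraint reduced to an axis (vertex k = n+1 >= 1):
   alpha u(k) = k f(k) g(k) f(k-1) / D,  beta v(k) = k g(k) f(k-1) g(k-1) / D,
   where f, g are the increments of u, v along the axis and U, V the values of
   u, v on the axis. *)
Definition axis_constraint (R : realType) (alpha beta : R[i])
    (U V f g : nat -> R[i]) : Prop :=
  forall n : nat,
    alpha * U n.+1 = (n.+1)%:R * (f n.+1 * g n.+1 * f n) / denom f g n /\
    beta * V n.+1 = (n.+1)%:R * (g n.+1 * f n * g n) / denom f g n.

Definition expi (R : realType) (theta : R) : R[i] := (cos theta) +i* (sin theta).

From mathcomp Require Import all_boot all_algebra.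
From mathcomp Require Import complex reals trigo.
From mathcomp Require Import ring zify.
Import GRing.Theory Num.Theory.
Set Implicit Arguments.
Unset Strict Implicit.
Unset Printing Implicit Defensive.

Local Open Scope ring_scope.

(* Along an axis with alpha = beta, write alpha U(n+1) = c f(n) and
   alpha V(n+1) = d g(n).  The constraint at the vertex n+1 forces
   c f(n) = d f(n+1) and (c + d) g(n+1) + d g(n) = (n+1) g(n+1), which
   determine the coefficients at n+1.  Starting from c = d = alpha at n = 0,
   they run through the 3-cycle
     (m + alpha, m + alpha) -> (m + 2 alpha, m + 1 - alpha) -> (m + 1, m + 1)
       -> (m + 1 + alpha, m + 1 + alpha).
   When c = d the u-increment repeats, when c + 2d = n + 1 the v-increment
   repeats, and at n = 3m + 2 both happen; as the w-increments are 1/(f g),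
   the increments themselves, not only their moduli, coincide. *)

Lemma axis_vertex (C : numFieldType) (n : nat) (c d p q x y : C) :
  p != 0 -> q != 0 -> x != 0 -> y != 0 -> x * y + y * p + p * q != 0 ->
  c * p = n.+1%:R * (x * y * p) / (x * y + y * p + p * q) ->
  d * q = n.+1%:R * (y * p * q) / (x * y + y * p + p * q) ->
  [/\ c * p = d * x, (c + d) * y + d * q = n.+1%:R * y, c != 0 & d != 0].
Proof.
set D := x * y + y * p + p * q => p0 q0 x0 y0 D0 hc hd.
have cD : c * D = n.+1%:R * x * y.
  by apply: (mulIf p0); rewrite mulrAC hc; field.
have dD : d * D = n.+1%:R * y * p.
  by apply: (mulIf q0); rewrite mulrAC hd; field.
have ratio : c * p = d * x.
  by apply: (mulIf D0); rewrite mulrAC cD [d * x * D]mulrAC dD; ring.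
have nat_neq0 : n.+1%:R != 0 :> C by rewrite pnatr_eq0.
split=> //.
- apply: (mulIf p0).
  have: ((c + d) * y + d * q) * p - d * D = y * (c * p - d * x) by rewrite /D; ring.
  by rewrite ratio subrr mulr0 dD => /eqP; rewrite subr_eq0 => /eqP.
- apply: contraNneq (mulf_neq0 (mulf_neq0 nat_neq0 x0) y0).
  by rewrite -cD => ->; rewrite mul0r.
- apply: contraNneq (mulf_neq0 (mulf_neq0 nat_neq0 y0) p0).
  by rewrite -dD => ->; rewrite mul0r.
Qed.

Section AxisRecursion.

Variables (R : realType) (a : R[i]) (U V W f g : nat -> R[i]).
Hypotheses (U0 : U 0%N = 0) (V0 : V 0%N = 0).
Hypotheses (f_def : forall n, f n = U n.+1 - U n)
           (g_def : forall n, g n = V n.+1 - V n).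
Hypotheses (f_neq0 : forall n, f n != 0) (g_neq0 : forall n, g n != 0)
           (denom_neq0 : forall n, denom f g n != 0).
Hypothesis constraint : axis_constraint a a U V f g.
Hypothesis W_inc : forall n, W n.+1 - W n = (f n * g n)^-1.

Definition axis_coeffs n c d := a * U n.+1 = c * f n /\ a * V n.+1 = d * g n.

Lemma aU_next n : a * U n.+2 = a * U n.+1 + a * f n.+1.
Proof. by rewrite f_def; ring. Qed.

Lemma aV_next n : a * V n.+2 = a * V n.+1 + a * g n.+1.
Proof. by rewrite g_def; ring. Qed.

Lemma axis_coeffs_vertex n c d : axis_coeffs n c d ->
  [/\ c * f n = d * f n.+1, (c + d) * g n.+1 + d * g n = n.+1%:R * g n.+1,
      c != 0 & d != 0].
Proof.
case=> hU hV; have [cU cV] := constraint n.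
apply: axis_vertex => //; first exact: denom_neq0.
- by rewrite -hU; exact: cU.
- by rewrite -hV; exact: cV.
Qed.

Lemma f_succ_of_diag_coeffs n c : axis_coeffs n c c -> f n.+1 = f n.
Proof.
by move=> hc; have [ratio _ c0 _] := axis_coeffs_vertex hc; apply: (mulfI c0).
Qed.

Lemma g_succ_of_balanced_coeffs n c d :
  c + 2 * d = n.+1%:R -> axis_coeffs n c d -> g n.+1 = g n.
Proof.
move=> hcd hc; have [_ g_step _ d0] := axis_coeffs_vertex hc.
apply: (mulfI d0); apply: (addrI ((c + d) * g n.+1)).
by rewrite g_step -hcd; ring.
Qed.

Lemma axis_coeffs_next_diag n c c' d' :
  c' = c + a -> d' = n.+1%:R - 2 * c + a ->
  axis_coeffs n c c -> axis_coeffs n.+1 c' d'.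
Proof.
move=> -> -> hc; have [_ g_step _ _] := axis_coeffs_vertex hc.
have f_eq := f_succ_of_diag_coeffs hc; case: hc => hU hV; split.
- by rewrite aU_next hU f_eq; ring.
- rewrite aV_next hV (_ : c * g n = n.+1%:R * g n.+1 - (c + c) * g n.+1).
    by ring.
  by rewrite -g_step; ring.
Qed.

Lemma axis_coeffs_next_balanced n c d c' :
  c + 2 * d = n.+1%:R -> c' = d + a ->
  axis_coeffs n c d -> axis_coeffs n.+1 c' c'.
Proof.
move=> hcd -> hc; have [ratio _ _ _] := axis_coeffs_vertex hc.
have g_eq := g_succ_of_balanced_coeffs hcd hc; case: hc => hU hV; split.
- by rewrite aU_next hU ratio; ring.
- by rewrite aV_next hV g_eq; ring.
Qed.

Lemma axis_coeffs_period m :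
  axis_coeffs (3 * m) (m%:R + a) (m%:R + a) ->
  [/\ f (3 * m).+1 = f (3 * m), g (3 * m).+2 = g (3 * m).+1,
      f (3 * m).+3 = f (3 * m).+2, g (3 * m).+3 = g (3 * m).+2
    & axis_coeffs (3 * m.+1) (m.+1%:R + a) (m.+1%:R + a)]%N.
Proof.
move=> h0.
have h1 : axis_coeffs (3 * m).+1 (m%:R + 2 * a) (m%:R + 1 - a).
  by apply: axis_coeffs_next_diag h0; ring.
have h2 : axis_coeffs (3 * m).+2 m.+1%:R m.+1%:R.
  by apply: axis_coeffs_next_balanced h1; ring.
split.
- exact: f_succ_of_diag_coeffs h0.
- by apply: g_succ_of_balanced_coeffs h1; ring.
- exact: f_succ_of_diag_coeffs h2.
- by apply: g_succ_of_balanced_coeffs h2; ring.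
- rewrite (_ : 3 * m.+1 = (3 * m).+3)%N; last by lia.
  by apply: axis_coeffs_next_diag h2; ring.
Qed.

Lemma axis_coeffs_3mul m : axis_coeffs (3 * m) (m%:R + a) (m%:R + a).
Proof.
elim: m => [|m IH]; last by case: (axis_coeffs_period IH).
by rewrite muln0 /axis_coeffs f_def g_def U0 V0 !subr0 add0r.
Qed.

Lemma axis_increments_3periodic m :
  [/\ f (3 * m).+1 = f (3 * m), g (3 * m).+2 = g (3 * m).+1,
      f (3 * m).+3 = f (3 * m).+2 & g (3 * m).+3 = g (3 * m).+2]%N.
Proof. by case: (axis_coeffs_period (axis_coeffs_3mul m)). Qed.

Lemma axis_increment_norms k : (1 <= k)%N ->
  `|U (3 * k - 1)%N - U (3 * k - 2)%N| = `|U (3 * k - 2)%N - U (3 * k - 3)%N| /\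
  `|V (3 * k)%N - V (3 * k - 1)%N| = `|V (3 * k - 1)%N - V (3 * k - 2)%N| /\
  `|W (3 * k + 1)%N - W (3 * k)%N| = `|W (3 * k)%N - W (3 * k - 1)%N|.
Proof.
case: k => // m _; have [f1 g2 f3 g3] := axis_increments_3periodic m.
have -> : (3 * m.+1 - 1 = (3 * m).+2)%N by lia.
have -> : (3 * m.+1 - 2 = (3 * m).+1)%N by lia.
have -> : (3 * m.+1 - 3 = 3 * m)%N by lia.
have -> : (3 * m.+1 + 1 = (3 * m).+4)%N by lia.
have -> : (3 * m.+1 = (3 * m).+3)%N by lia.
by rewrite -!f_def -!g_def !W_inc f3 g3 f1 g2.
Qed.

End AxisRecursion.

Theorem lemma21 (R : realType) (alpha beta : R[i]) (theta : R)
  (u v w : nat -> nat -> R[i]) :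
  0 < theta -> theta < pi ->
  (* normalisation and initial conditions *)
  u 0%N 0%N = 0 -> v 0%N 0%N = 0 -> w 0%N 0%N = 0 ->
  u 1%N 0%N = 1 -> v 1%N 0%N = 1 ->
  u 0%N 1%N = expi theta -> v 0%N 1%N = expi theta ->
  (* the fields are well defined: nonzero edge increments and denominators *)
  (forall n, incK u n != 0) -> (forall n, incK v n != 0) ->
  (forall n, incL u n != 0) -> (forall n, incL v n != 0) ->
  (forall n, denom (incK u) (incK v) n != 0) ->
  (forall n, denom (incL u) (incL v) n != 0) ->
  (* the fgh-system constraint at the vertices of the two axes *)
  axis_constraint alpha beta (fun k => u k 0%N) (fun k => v k 0%N)
    (incK u) (incK v) ->
  axis_constraint alpha beta (fun l => u 0%N l) (fun l => v 0%N l)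
    (incL u) (incL v) ->
  (* definition of w on the (positively oriented) axis edges *)
  (forall n, incK w n = (incK u n * incK v n)^-1) ->
  (forall n, incL w n = (incL u n * incL v n)^-1) ->
  beta = alpha ->
  forall k l : nat, (1 <= k)%N -> (1 <= l)%N ->
  `|u (3 * k - 1)%N 0%N - u (3 * k - 2)%N 0%N|
        = `|u (3 * k - 2)%N 0%N - u (3 * k - 3)%N 0%N| /\
      `|v (3 * k)%N 0%N - v (3 * k - 1)%N 0%N|
        = `|v (3 * k - 1)%N 0%N - v (3 * k - 2)%N 0%N| /\
      `|w (3 * k + 1)%N 0%N - w (3 * k)%N 0%N|
        = `|w (3 * k)%N 0%N - w (3 * k - 1)%N 0%N| /\
      `|u 0%N (3 * l - 1)%N - u 0%N (3 * l - 2)%N|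
        = `|u 0%N (3 * l - 2)%N - u 0%N (3 * l - 3)%N| /\
      `|v 0%N (3 * l)%N - v 0%N (3 * l - 1)%N|
        = `|v 0%N (3 * l - 1)%N - v 0%N (3 * l - 2)%N| /\
      `|w 0%N (3 * l + 1)%N - w 0%N (3 * l)%N|
        = `|w 0%N (3 * l)%N - w 0%N (3 * l - 1)%N|.
Proof.
move=> _ _ u0 v0 _ _ _ _ _ uK vK uL vL DK DL cK cL wK wL beta_alpha k l k1 l1.
subst beta.
have [uK3 [vK3 wK3]] := axis_increment_norms (U := fun k => u k 0%N)
  (V := fun k => v k 0%N) (W := fun k => w k 0%N)
  u0 v0 (fun=> erefl) (fun=> erefl) uK vK DK cK wK k1.
have [uL3 [vL3 wL3]] := axis_increment_norms (U := fun l => u 0%N l)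
  (V := fun l => v 0%N l) (W := fun l => w 0%N l)
  u0 v0 (fun=> erefl) (fun=> erefl) uL vL DL cL wL l1.
by [].
Qed.
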